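(* Let $f:\mathbb{R}^p\to\mathbb{R}$ be of the form $f(x)=g(Hx)$ with $H\in\mathbb{R}^{m\times p}$ and $g:\mathbb{R}^m\to\mathbb{R}$ an $\alpha$-strongly convex ($\alpha>0$) and $L$-smooth function, and assume the set $X^*$ of minimizers of $f$ is nonempty. Let $c_H>0$ be a Hoffman coefficient of $H$, i.e. a constant with $\|Hx-H[x]\|^2\ge c_H\|x-[x]\|^2$ for all $x\in\mathbb{R}^p$, and let $C_H=1/\|H\|_2^2$. Then for all $x\in\mathbb{R}^p$, $$\langle\nabla f(x)-\nabla f([x]),\,x-[x]\rangle\ge\frac{L\alpha c_H}{L+\alpha}\|x-[x]\|^2+\frac{C_H}{L+\alpha}\|\nabla f(x)-\nabla f([x])\|^2.$$
   Context: $g$ is $L$-smooth if $\|\nabla g(u)-\nabla g(v)\|\le L\|u-v\|$, and $\alpha$-strongly convex if $g(v)\ge g(u)+\langle v-u,\nabla g(u)\rangle+\frac\alpha2\|v-u\|^2$ for all $u,v$. $f$ is convex, so $X^*$ is closed and convex and $[x]$ denotes the Euclidean projection of $x$ onto $X^*$. $\|H\|_2=\sup_{x\ne0}\|Hx\|/\|x\|$; norms are Euclidean. *)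

From HB Require Import structures.
From mathcomp Require Import all_boot all_order all_algebra.
From mathcomp Require Import all_classical all_reals all_analysis.
Set Implicit Arguments. Unset Strict Implicit. Unset Printing Implicit Defensive.
Import Order.TTheory GRing.Theory Num.Theory.
Import numFieldNormedType.Exports.
Local Open Scope classical_set_scope.
Local Open Scope ring_scope.

Section Defs.
Variable R : realType.

Definition dotv n (u v : 'cV[R]_n) : R := \sum_(i < n) u i ord0 * v i ord0.
Definition enorm n (v : 'cV[R]_n) : R := Num.sqrt (dotv v v).

Definition has_gradient n (f : 'cV[R]_n -> R) (df : 'cV[R]_n -> 'cV[R]_n) :=
  forall x : 'cV[R]_n,
    (fun h : 'cV[R]_n => (f (x + h) - f x - dotv (df x) h) / enorm h) @ (0 : 'cV[R]_n)^' --> (0 : R).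

Definition L_smooth n (L : R) (dg : 'cV[R]_n -> 'cV[R]_n) :=
  forall u v, enorm (dg u - dg v) <= L * enorm (u - v).

Definition strongly_convex n (alpha : R) (g : 'cV[R]_n -> R) (dg : 'cV[R]_n -> 'cV[R]_n) :=
  forall u v, g v >= g u + dotv (v - u) (dg u) + alpha / 2 * enorm (v - u) ^+ 2.

Definition argmin n (f : 'cV[R]_n -> R) : set 'cV[R]_n :=
  [set x | forall y, f x <= f y].

Definition is_proj n (S : set 'cV[R]_n) (x xs : 'cV[R]_n) :=
  S xs /\ forall y, S y -> enorm (x - xs) <= enorm (x - y).

Definition opnorm2 m p (H : 'M[R]_(m, p)) : R :=
  sup [set r | exists x : 'cV[R]_p, x != 0 /\ r = enorm (H *m x) / enorm x].

End Defs.

From HB Require Import structures.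
From mathcomp Require Import all_boot all_order all_algebra.
From mathcomp Require Import all_classical all_reals all_analysis.
From mathcomp Require Import ring lra.
Import Order.TTheory GRing.Theory Num.Theory.
Local Open Scope classical_set_scope.
Local Open Scope ring_scope.

(* Since f = g o H, its gradient is H^T (grad g)(H .), so the left-hand side equals
   <grad g(Hx) - grad g(H[x]), Hx - H[x]>.  Co-coercivity of an alpha-strongly convex
   L-smooth g bounds this below by
   (alpha L ||Hx - H[x]||^2 + ||grad g(Hx) - grad g(H[x])||^2) / (L + alpha);
   the Hoffman bound handles the first term and ||H^T w|| <= ||H||_2 ||w|| the second.
   Co-coercivity follows by adding two strong convexity inequalities and two instances
   of the descent lemma at a well-chosen step, first for a smoothness constant L' > alpha
   and then letting L' decrease to L.  The descent lemma itself is obtained from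
   convexity alone by cutting [u, u + d] into N equal pieces and letting N grow. *)

Section InnerProduct.
Context {R : realType} {n : nat}.
Implicit Types (u v w : 'cV[R]_n) (c : R).

Lemma dotvC u v : dotv u v = dotv v u.
Proof. by apply: eq_bigr => i _; rewrite mulrC. Qed.

Lemma dotvDl u v w : dotv (u + v) w = dotv u w + dotv v w.
Proof. by rewrite /dotv -big_split; apply: eq_bigr => i _; rewrite mxE mulrDl. Qed.

Lemma dotvDr u v w : dotv w (u + v) = dotv w u + dotv w v.
Proof. by rewrite dotvC dotvDl !(dotvC w). Qed.

Lemma dotvZl c u w : dotv (c *: u) w = c * dotv u w.
Proof. by rewrite /dotv mulr_sumr; apply: eq_bigr => i _; rewrite mxE mulrA. Qed.

Lemma dotvZr c u w : dotv w (c *: u) = c * dotv w u.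
Proof. by rewrite dotvC dotvZl dotvC. Qed.

Lemma dotvNl u w : dotv (- u) w = - dotv u w.
Proof. by rewrite -scaleN1r dotvZl mulN1r. Qed.

Lemma dotvNr u w : dotv w (- u) = - dotv w u.
Proof. by rewrite dotvC dotvNl dotvC. Qed.

Lemma dotv0l w : dotv 0 w = 0.
Proof. by rewrite -(scale0r (0 : 'cV[R]_n)) dotvZl mul0r. Qed.

Lemma dotv0r w : dotv w 0 = 0.
Proof. by rewrite dotvC dotv0l. Qed.

Lemma dotvv_ge0 u : 0 <= dotv u u.
Proof. by apply: sumr_ge0 => i _; rewrite -expr2 sqr_ge0. Qed.

Lemma dotvv_eq0 u : (dotv u u == 0) = (u == 0).
Proof.
apply/eqP/eqP => [/psumr_eq0P u0|->]; last exact: dotv0l.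
apply/matrixP => i j; rewrite (ord1 j) mxE.
have /eqP : u i ord0 * u i ord0 = 0 by apply: u0 => // k _; rewrite -expr2 sqr_ge0.
by rewrite mulf_eq0 orbb => /eqP.
Qed.

Lemma enorm_ge0 u : 0 <= enorm u.
Proof. exact: sqrtr_ge0. Qed.

Lemma enorm0 : enorm (0 : 'cV[R]_n) = 0.
Proof. by rewrite /enorm dotv0l sqrtr0. Qed.

Lemma enorm_gt0 u : (0 < enorm u) = (u != 0).
Proof. by rewrite sqrtr_gt0 lt_def dotvv_ge0 dotvv_eq0 andbT. Qed.

Lemma sqr_enorm u : enorm u ^+ 2 = dotv u u.
Proof. by rewrite sqr_sqrtr // dotvv_ge0. Qed.

Lemma enormZ c u : enorm (c *: u) = `|c| * enorm u.
Proof. by rewrite /enorm dotvZl dotvZr mulrA -expr2 sqrtrM ?sqr_ge0 // sqrtr_sqr. Qed.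

Lemma sqr_dotv_le u v : dotv u v ^+ 2 <= dotv u u * dotv v v.
Proof.
have [/eqP|vv0] := eqVneq (dotv v v) 0.
  by rewrite dotvv_eq0 => /eqP ->; rewrite dotv0r dotv0l expr0n mulr0.
have vv_gt0 : 0 < dotv v v by rewrite lt_def vv0 dotvv_ge0.
have := dotvv_ge0 (dotv v v *: u - dotv u v *: v).
rewrite !(dotvDl, dotvDr, dotvNl, dotvNr, dotvZl, dotvZr) (dotvC v u) => h.
have : 0 <= dotv v v * (dotv v v * dotv u u - dotv u v ^+ 2) by nra.
by rewrite pmulr_rge0 // subr_ge0 mulrC.
Qed.

Lemma dotv_le u v : dotv u v <= enorm u * enorm v.
Proof.
apply: le_trans (ler_norm _) _.
by rewrite -sqrtr_sqr -sqrtrM ?dotvv_ge0 // ler_wsqrtr // sqr_dotv_le.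
Qed.

End InnerProduct.

Lemma dotv_mulmx {R : realType} {m n} (A : 'M[R]_(m, n)) u v :
  dotv (A *m u) v = dotv u (A^T *m v).
Proof.
rewrite /dotv; under eq_bigr do rewrite mxE big_distrl.
under [RHS]eq_bigr do rewrite mxE big_distrr.
rewrite exchange_big; apply: eq_bigr => i _; apply: eq_bigr => j _.
by rewrite mxE /=; ring.
Qed.

Section Limits.
Context {R : realType}.
Implicit Types a b c : R.

Lemma le_of_forall_le_add_divSn a b c :
  (forall N : nat, a <= b + c / N.+1%:R) -> a <= b.
Proof.
move=> le_abc; apply/ler_addgt0Pr => e e_gt0.
have /ltW := truncnS_gt (`|c| / e); rewrite ler_pdivrMr // => cN.
apply: le_trans (le_abc (Num.truncn (`|c| / e))) _.
by rewrite lerD2l ler_pdivrMr ?ltr0Sn // mulrC (le_trans (ler_norm c)).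
Qed.

Lemma le_of_forall_le_add_mul a b c :
  (forall e, 0 < e -> a <= b + e * c) -> a <= b.
Proof.
move=> le_abc; have [c_le0|c_gt0] := leP c 0.
  by apply: le_trans (le_abc 1 ltr01) _; rewrite mul1r gerDl.
apply/ler_addgt0Pr => e e_gt0.
by have := le_abc (e / c) (divr_gt0 e_gt0 c_gt0); rewrite divfK ?gt_eqF.
Qed.

End Limits.

Section ConvexSmooth.
Context {R : realType} {n : nat}.
Context {g : 'cV[R]_n -> R} {dg : 'cV[R]_n -> 'cV[R]_n}.
Implicit Types u v w d : 'cV[R]_n.

Lemma strongly_convex_grad_ineq {alpha : R} : 0 <= alpha ->
  strongly_convex alpha g dg -> forall u v, g u + dotv (v - u) (dg u) <= g v.
Proof.
move=> alpha_ge0 sc u v; apply: le_trans (sc u v); rewrite lerDl.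
by rewrite mulr_ge0 ?divr_ge0 ?sqr_ge0.
Qed.

Lemma L_smooth_le {L L' : R} : L <= L' -> L_smooth L dg -> L_smooth L' dg.
Proof.
move=> LL' smooth u v; apply: le_trans (smooth u v) _.
by rewrite ler_wpM2r ?enorm_ge0.
Qed.

Section Descent.
Context {L : R}.
Hypothesis convex_g : forall u v, g u + dotv (v - u) (dg u) <= g v.
Hypothesis smooth : L_smooth L dg.

Lemma dotv_grad_le u w d :
  dotv d (dg w) <= dotv d (dg u) + L * enorm (w - u) * enorm d.
Proof.
rewrite -[dg w](subrK (dg u)) dotvDr addrC lerD2l.
apply: le_trans (dotv_le _ _) _.
by rewrite mulrC ler_wpM2r ?enorm_ge0.
Qed.

Lemma convex_increment_le u d (a b : R) : a <= b -> 0 <= b ->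
  g (u + b *: d) - g (u + a *: d) <= (b - a) * (dotv (dg u) d + L * b * dotv d d).
Proof.
move=> le_ab b_ge0.
have := convex_g (u + b *: d) (u + a *: d).
rewrite opprD addrACA subrr add0r -scalerBl dotvZl -lerBrDl => cvx.
rewrite -lerN2 -mulNr !opprB in cvx.
apply: (le_trans cvx); rewrite ler_wpM2l ?subr_ge0 // [dotv (dg u) d]dotvC.
apply: le_trans (dotv_grad_le u _ _) _.
by rewrite addrAC subrr add0r enormZ ger0_norm // -sqr_enorm expr2 !mulrA.
Qed.

Lemma descent_steps u d (h : R) k : 0 <= h ->
  g (u + (k%:R * h) *: d) - g u <=
    k%:R * h * dotv (dg u) d + L * dotv d d * h ^+ 2 * (k * k.+1)%:R / 2.
Proof.
move=> h_ge0; elim: k => [|k IH].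
  by rewrite mul0n !mul0r scale0r addr0 subrr mulr0 mul0r addr0.
set a := k%:R * h; set b := k.+1%:R * h.
have le_ab : a <= b by rewrite ler_wpM2r // ler_nat.
have inc := convex_increment_le u d _ _ le_ab (mulr_ge0 (ler0n _ _) h_ge0).
have -> : g (u + b *: d) - g u = (g (u + b *: d) - g (u + a *: d)) + (g (u + a *: d) - g u).
  by rewrite addrA subrK.
apply: (le_trans (lerD inc IH)); rewrite le_eqVlt; apply/predU1P; left.
by rewrite /a /b !natrM -[k.+2]addn1 -[k.+1]addn1 !natrD; field.
Qed.

Lemma descent_lemma u d : g (u + d) <= g u + dotv (dg u) d + L / 2 * dotv d d.
Proof.
apply: (@le_of_forall_le_add_divSn _ _ _ (L / 2 * dotv d d)) => N.
have h_ge0 : 0 <= N.+1%:R^-1 :> R by rewrite invr_ge0 ler0n.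
have := descent_steps u d _ N.+1 h_ge0.
rewrite mulfV ?pnatr_eq0 // scale1r mul1r lerBlDl => le_g.
apply: (le_trans le_g); rewrite le_eqVlt; apply/predU1P; left.
by rewrite natrM -[N.+2]addn1 natrD; field; rewrite nat1r pnatr_eq0.
Qed.

End Descent.

Section StronglyConvexSmooth.
Context {alpha L : R}.
Hypothesis alpha_gt0 : 0 < alpha.
Hypothesis sc : strongly_convex alpha g dg.
Hypothesis smooth : L_smooth L dg.

Let convex_g := strongly_convex_grad_ineq (ltW alpha_gt0) sc.

Lemma strongly_convex_le_smooth {u v} : u != v -> alpha <= L.
Proof.
move=> neq_uv.
have lower := sc u v.
have upper := descent_lemma convex_g smooth u (v - u).
rewrite addrCA subrr addr0 -sqr_enorm dotvC in upper.
have e_gt0 : 0 < enorm (v - u) ^+ 2 by rewrite exprn_gt0 // enorm_gt0 subr_eq0 eq_sym.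
have : alpha / 2 * enorm (v - u) ^+ 2 <= L / 2 * enorm (v - u) ^+ 2 by lra.
by rewrite ler_pM2r // ler_pM2r ?invr_gt0.
Qed.

Lemma cocoercive_strict {L' : R} : alpha < L' -> L_smooth L' dg -> forall u v,
  enorm (dg v - dg u) ^+ 2 + alpha * L' * enorm (v - u) ^+ 2
    <= (L' + alpha) * dotv (dg v - dg u) (v - u).
Proof.
move=> lt_alphaL' smooth' u v.
have M_gt0 : 0 < L' - alpha by rewrite subr_gt0.
(* s is the gradient step of length 1/(L' - alpha) for the convex, (L' - alpha)-smooth
   function g - alpha/2 ||.||^2, as in the usual proof of co-coercivity. *)
set s := (alpha - L')^-1 *: ((dg v - dg u) - alpha *: (v - u)).
have h1 := sc u (v + s).
have h2 := descent_lemma convex_g smooth' v s.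
have h3 := sc v (u - s).
have h4 := descent_lemma convex_g smooth' u (- s).
rewrite -subr_ge0 in h1; rewrite -subr_ge0 in h2.
rewrite -subr_ge0 in h3; rewrite -subr_ge0 in h4.
have sum_ge0 := mulr_ge0 (ltW M_gt0) (addr_ge0 (addr_ge0 h1 h2) (addr_ge0 h3 h4)).
rewrite -subr_ge0; apply: (le_trans sum_ge0); rewrite le_eqVlt; apply/predU1P; left.
rewrite !sqr_enorm /s; set p := dg u; set q := dg v.
rewrite !(dotvDl, dotvDr, dotvNl, dotvNr, dotvZl, dotvZr).
rewrite ?(dotvC v u) ?(dotvC p u) ?(dotvC p v) ?(dotvC q u) ?(dotvC q v) ?(dotvC q p).
by field; rewrite subr_eq0 lt_eqF.
Qed.

Lemma cocoercive u v :
  enorm (dg v - dg u) ^+ 2 + alpha * L * enorm (v - u) ^+ 2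
    <= (L + alpha) * dotv (dg v - dg u) (v - u).
Proof.
have [->|neq_vu] := eqVneq v u; first by rewrite !subrr enorm0 dotv0r expr0n !mulr0 addr0.
have le_alphaL := strongly_convex_le_smooth neq_vu.
apply: (@le_of_forall_le_add_mul _ _ _
  (dotv (dg v - dg u) (v - u) - alpha * enorm (v - u) ^+ 2)) => e e_gt0.
have lt_alphaLe : alpha < L + e by rewrite ltr_pwDr.
have le_LLe : L <= L + e by rewrite lerDl ltW.
have := cocoercive_strict lt_alphaLe (L_smooth_le le_LLe smooth) u v.
lra.
Qed.

End StronglyConvexSmooth.

End ConvexSmooth.

Section Gradient.
Context {R : realType} {p : nat}.
Context {f : 'cV[R]_p -> R} {df : 'cV[R]_p -> 'cV[R]_p}.
Hypothesis grad_f : has_gradient f df.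

Lemma has_gradient_step x {q : 'cV[R]_p} {e : R} : q != 0 -> 0 < e ->
  exists2 t, 0 < t & f (x + t *: q) - f x - dotv (df x) (t *: q) < e * enorm (t *: q).
Proof.
move=> q_neq0 e_gt0.
have /cvgr0_norm_lt /(_ e e_gt0) := grad_f x.
(* Neighbourhoods of 0 in 'cV are balls of the max-norm `|_|`, not of enorm. *)
rewrite /within /= => /nbhs_norm0P [d d_gt0 near_x].
have q_gt0 : 0 < `|q| by rewrite normr_gt0.
pose t := d / (2 * (`|q| + 1)).
have t_gt0 : 0 < t by rewrite divr_gt0 // mulr_gt0 // ltr_pwDr.
exists t => //.
have tq_lt : `|t *: q| < d.
  rewrite normrZ gtr0_norm // /t mulrAC ltr_pdivrMr ?mulr_gt0 ?ltr_pwDr //.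
  rewrite ltr_pM2l //; lra.
have tq_neq0 : t *: q != 0 by rewrite scaler_eq0 negb_or q_neq0 gt_eqF.
have tq_gt0 : 0 < enorm (t *: q) by rewrite enorm_gt0.
rewrite -ltr_pdivrMr //; exact: le_lt_trans (ler_norm _) (near_x _ tq_lt tq_neq0).
Qed.

Lemma gradient_eq_subgradient x w :
  (forall y, f x + dotv (y - x) w <= f y) -> df x = w.
Proof.
move=> subgrad; have [/subr0_eq ->//|q_neq0] := eqVneq (w - df x) 0.
set q := w - df x in q_neq0 *.
have q_gt0 : 0 < enorm q by rewrite enorm_gt0.
have [t t_gt0 step] := has_gradient_step x q_neq0 q_gt0.
have := subgrad (x + t *: q); rewrite addrAC subrr add0r => lower.
have dq : dotv (t *: q) w - dotv (df x) (t *: q) = t * dotv q q.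
  by rewrite dotvZl dotvZr (dotvC (df x)) -mulrBr -dotvNr -dotvDr.
have nq : enorm q * enorm (t *: q) = t * dotv q q.
  by rewrite enormZ gtr0_norm // mulrCA -expr2 sqr_enorm.
have : t * dotv q q < t * dotv q q by lra.
by rewrite ltxx.
Qed.

End Gradient.

Lemma gradient_mulmx {R : realType} {m p} (H : 'M[R]_(m, p))
    {g : 'cV[R]_m -> R} {dg : 'cV[R]_m -> 'cV[R]_m} {df : 'cV[R]_p -> 'cV[R]_p} :
  (forall u v, g u + dotv (v - u) (dg u) <= g v) ->
  has_gradient (fun x => g (H *m x)) df -> forall x, df x = H^T *m dg (H *m x).
Proof.
move=> convex_g grad_f x; apply: (gradient_eq_subgradient grad_f) => y.
by rewrite -dotv_mulmx mulmxBr convex_g.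
Qed.

Section OperatorNorm.
Context {R : realType} {m p : nat} (H : 'M[R]_(m, p)).

Lemma enorm_mulmx_bounded : exists K, forall z, enorm (H *m z) <= K * enorm z.
Proof.
pose r i : 'cV[R]_p := (row i H)^T.
exists (Num.sqrt (\sum_i dotv (r i) (r i))) => z.
rewrite -sqrtrM ?sumr_ge0 // => [|i _]; last exact: dotvv_ge0.
apply: ler_wsqrtr; rewrite {1}/dotv big_distrl /=; apply: ler_sum => i _.
have -> : (H *m z) i ord0 = dotv (r i) z.
  by rewrite mxE; apply: eq_bigr => j _; rewrite !mxE.
by rewrite -expr2 sqr_dotv_le.
Qed.

Lemma enorm_mulmx_le z : enorm (H *m z) <= opnorm2 H * enorm z.
Proof.
have [->|z_neq0] := eqVneq z 0; first by rewrite mulmx0 !enorm0 mulr0.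
have [K le_K] := enorm_mulmx_bounded.
have z_gt0 : 0 < enorm z by rewrite enorm_gt0.
rewrite -ler_pdivrMr //; apply: ub_le_sup; last by exists z.
by exists K => _ [y [y_neq0 ->]]; rewrite ler_pdivrMr ?enorm_gt0.
Qed.

Lemma sqr_enorm_trmx_mulmx_le w :
  (opnorm2 H ^+ 2)^-1 * enorm (H^T *m w) ^+ 2 <= enorm w ^+ 2.
Proof.
set y := H^T *m w; set nH := opnorm2 H.
have [->|y_neq0] := eqVneq y 0; first by rewrite enorm0 expr0n /= mulr0 sqr_ge0.
have y_gt0 : 0 < enorm y by rewrite enorm_gt0.
have le_y : enorm y <= nH * enorm w.
  rewrite -(ler_pM2r y_gt0) -expr2 sqr_enorm {1}/y dotv_mulmx trmxK.
  apply: le_trans (dotv_le _ _) _.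
  by rewrite mulrAC mulrC ler_wpM2r ?enorm_ge0 ?enorm_mulmx_le.
have nH_neq0 : nH != 0.
  by apply: contraTneq (lt_le_trans y_gt0 le_y) => ->; rewrite mul0r ltxx.
have sq : enorm y ^+ 2 <= nH ^+ 2 * enorm w ^+ 2.
  by rewrite -exprMn ler_pXn2r ?nnegrE ?enorm_ge0 // (le_trans (ltW y_gt0)).
apply: le_trans (ler_wpM2l _ sq) _; first by rewrite invr_ge0 sqr_ge0.
by rewrite mulrA mulVf ?mul1r // sqrf_eq0.
Qed.

End OperatorNorm.

Theorem lemma5p1 (R : realType) (m p : nat) (H : 'M[R]_(m, p))
  (g : 'cV[R]_m -> R) (dg : 'cV[R]_m -> 'cV[R]_m)
  (df : 'cV[R]_p -> 'cV[R]_p) (alpha L cH : R) :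
  0 < alpha ->
  has_gradient g dg ->
  strongly_convex alpha g dg ->
  L_smooth L dg ->
  has_gradient (fun x => g (H *m x)) df ->
  argmin (fun x => g (H *m x)) !=set0 ->
  0 < cH ->
  (forall x xs, is_proj (argmin (fun x => g (H *m x))) x xs ->
     enorm (H *m x - H *m xs) ^+ 2 >= cH * enorm (x - xs) ^+ 2) ->
  forall x xs, is_proj (argmin (fun x => g (H *m x))) x xs ->
    dotv (df x - df xs) (x - xs) >=
      L * alpha * cH / (L + alpha) * enorm (x - xs) ^+ 2
      + (opnorm2 H ^+ 2)^-1 / (L + alpha) * enorm (df x - df xs) ^+ 2.
Proof.
move=> alpha_gt0 _ sc smooth grad_f _ cH_gt0 hoffman x xs proj.
have [<-|x_neq_xs] := eqVneq x xs.
  by rewrite !subrr enorm0 dotv0l expr0n /= !mulr0 addr0.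
have le_hoff := hoffman x xs proj.
have Hx_neq : H *m x != H *m xs.
  apply: contraTneq le_hoff => ->; rewrite subrr enorm0 expr0n /= -ltNge.
  by rewrite mulr_gt0 // exprn_gt0 // enorm_gt0 subr_eq0.
have le_alphaL := strongly_convex_le_smooth alpha_gt0 sc smooth Hx_neq.
have LA_gt0 : 0 < L + alpha by lra.
have coco := cocoercive alpha_gt0 sc smooth (H *m xs) (H *m x).
have df_eq := gradient_mulmx H (strongly_convex_grad_ineq (ltW alpha_gt0) sc) grad_f.
rewrite !df_eq -mulmxBr dotv_mulmx trmxK [H *m (x - xs)]mulmxBr.
have adj := sqr_enorm_trmx_mulmx_le H (dg (H *m x) - dg (H *m xs)).
have le_scaled : L * alpha * (cH * enorm (x - xs) ^+ 2)
    <= L * alpha * enorm (H *m x - H *m xs) ^+ 2.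
  by rewrite ler_wpM2l // mulr_ge0 ?ltW // (lt_le_trans alpha_gt0).
rewrite mulrAC [(_^-1 / _) * _]mulrAC -mulrDl ler_pdivrMr //; lra.
Qed.
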